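(* For any $\delta\le1/4$, if $\mathcal{I}=([n],[m],\mathcal{V})$ is a $\delta$-ONI instance, then $m\ge 2n$.
   Context: Valuations are additive. $\mathrm{MMS}_i$ is the maximum over partitions of the goods into $n$ bundles of the minimum bundle value for agent $i$. The instance is ordered if $v_i(1)\ge\dots\ge v_i(m)$ for all $i$; normalized if every agent $i$ has an MMS partition into $n$ bundles each of value exactly $1$ to $i$; $\alpha$-irreducible if for every agent $i$: $v_i(1)<\alpha$, $v_i(\{2n-1,2n,2n+1\})<\alpha$, $v_i(\{3n-2,3n-1,3n,3n+1\})<\alpha$, $v_i(\{1,2n+1\})<\alpha$ (each condition only when the goods exist). $\delta$-ONI means ordered, normalized and $(3/4+\delta)$-irreducible. *)

From mathcomp Require Import all_boot all_order all_algebra.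
Set Implicit Arguments. Unset Strict Implicit. Unset Printing Implicit Defensive.
Import Order.TTheory GRing.Theory Num.Theory.
Local Open Scope ring_scope.

(* Instance ([n],[m],V): agents 'I_n, goods 'I_m; the good numbered j
   (1-based, as in the paper) is the ordinal j-1.  An additive valuation
   of agent i is given by v i : 'I_m -> R (values of single goods). *)

(* value of the good with 1-based number j (0 if it does not exist) *)
Definition good_val {R : realFieldType} {m : nat} (vi : 'I_m -> R) (j : nat) : R :=
  if (insub j.-1 : option 'I_m) is Some g then vi g else 0.

(* a partition of the goods into n (possibly empty) bundles is a map f :
   goods -> bundle index; additive value of bundle k *)
Definition bundle_val {R : realFieldType} {n m : nat} (vi : 'I_m -> R)
  (f : {ffun 'I_m -> 'I_n}) (k : 'I_n) : R :=
  \sum_(g | f g == k) vi g.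

(* f is an MMS partition for vi: its minimum bundle value is maximal over
   all partitions, i.e. for every partition f' the minimum bundle value of
   f' is at most the minimum bundle value of f. *)
Definition is_MMS_partition {R : realFieldType} {n m : nat} (vi : 'I_m -> R)
  (f : {ffun 'I_m -> 'I_n}) : Prop :=
  forall f' : {ffun 'I_m -> 'I_n},
    exists k : 'I_n, forall k' : 'I_n, bundle_val vi f' k <= bundle_val vi f k'.

Definition ordered_inst {R : realFieldType} {n m : nat} (v : 'I_n -> 'I_m -> R) : Prop :=
  forall (i : 'I_n) (g g' : 'I_m), (g <= g')%N -> v i g' <= v i g.

Definition normalized_inst {R : realFieldType} {n m : nat} (v : 'I_n -> 'I_m -> R) : Prop :=
  forall i : 'I_n, exists f : {ffun 'I_m -> 'I_n},
    is_MMS_partition (v i) f /\ forall k : 'I_n, bundle_val (v i) f k = 1.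

Definition irreducible_inst {R : realFieldType} {n m : nat} (alpha : R)
  (v : 'I_n -> 'I_m -> R) : Prop :=
  forall i : 'I_n,
    [/\ (1 <= m)%N -> good_val (v i) 1 < alpha,
        (2 * n + 1 <= m)%N ->
          good_val (v i) (2 * n - 1) + good_val (v i) (2 * n)
          + good_val (v i) (2 * n + 1) < alpha,
        (3 * n + 1 <= m)%N ->
          good_val (v i) (3 * n - 2) + good_val (v i) (3 * n - 1)
          + good_val (v i) (3 * n) + good_val (v i) (3 * n + 1) < alpha
      & (2 * n + 1 <= m)%N ->
          good_val (v i) 1 + good_val (v i) (2 * n + 1) < alpha].

Definition ONI {R : realFieldType} {n m : nat} (delta : R) (v : 'I_n -> 'I_m -> R) : Prop :=
  [/\ ordered_inst v, normalized_inst v & irreducible_inst (3 / 4 + delta) v].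

From mathcomp Require Import all_boot all_order all_algebra.
From mathcomp Require Import lra.
Import Order.TTheory GRing.Theory Num.Theory.
Local Open Scope ring_scope.

(* Irreducibility with [delta <= 1/4] makes the most valuable good worth less
   than [3/4 + delta <= 1], so in an ordered instance every good is worth less
   than 1 to every agent.  A bundle of value exactly 1 therefore contains at
   least two goods, and a normalized MMS partition into [n] such bundles needs
   at least [2 n] goods. *)

Lemma leq_mul_card_fibers (T K : finType) (f : T -> K) (c : nat) :
  (forall k, c <= #|[pred x | f x == k]|)%N -> (c * #|K| <= #|T|)%N.
Proof.
move=> fiber_ge.
have -> : #|T| = (\sum_(x : T) 1)%N by rewrite sum1_card.
rewrite (partition_big f predT) //= mulnC -sum_nat_const [leqLHS](eq_bigl predT) //.
by apply: leq_sum => k _; rewrite sum1_card; exact: fiber_ge.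
Qed.

Lemma bundle_card_gt1 (R : realFieldType) (n m : nat) (vi : 'I_m -> R)
    (f : {ffun 'I_m -> 'I_n}) (k : 'I_n) :
  (forall g, vi g < 1) -> bundle_val vi f k = 1 ->
  (1 < #|[pred g | f g == k]|)%N.
Proof.
move=> lt1 /eqP; rewrite ltnNge; apply: contraTN => /card_le1P single.
rewrite /bundle_val; case: (pickP [pred g | f g == k]) => [g kg | no_good].
- by rewrite (big_pred1 g) ?lt_eqF // => x; exact: single g kg x.
- by rewrite big_pred0 // eq_sym oner_eq0.
Qed.

Lemma good_val_first (R : realFieldType) (m : nat) (vi : 'I_m -> R)
    (m_gt0 : (0 < m)%N) :
  good_val vi 1 = vi (Ordinal m_gt0).
Proof. by rewrite /good_val /= (insubT (fun k => k < m)%N m_gt0). Qed.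

Lemma ONI_val_lt1 (R : realFieldType) (n m : nat) (delta : R)
    (v : 'I_n -> 'I_m -> R) (i : 'I_n) (g : 'I_m) :
  delta <= 1 / 4 -> ONI delta v -> v i g < 1.
Proof.
move=> delta_le [ordered _ irreducible].
have m_gt0 : (0 < m)%N by apply: leq_ltn_trans (ltn_ord g).
have [first_lt _ _ _] := irreducible i.
have := first_lt m_gt0; rewrite good_val_first => first_lt_alpha.
apply: le_lt_trans (ordered i (Ordinal m_gt0) g (leq0n g)) _.
apply: lt_le_trans first_lt_alpha _; lra.
Qed.

Theorem mainTheorem13 (R : realFieldType) (n m : nat) (delta : R)
  (v : 'I_n -> 'I_m -> R) :
  (forall (i : 'I_n) (g : 'I_m), 0 <= v i g) ->
  delta <= 1 / 4 ->
  ONI delta v ->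
  (2 * n <= m)%N.
Proof.
move=> _ delta_le oni; case: n v oni => [|n] v oni //.
have [_ normalized _] := oni.
have [f [_ bundles_eq1]] := normalized ord0.
rewrite -{1}(card_ord n.+1) -(card_ord m).
apply: (@leq_mul_card_fibers _ _ f 2) => k.
apply: bundle_card_gt1 (bundles_eq1 k) => g.
exact: ONI_val_lt1 delta_le oni.
Qed.
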